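(* Let $R$ be a ring with identity and $a,b,c,p,q\in R$, and suppose there exist $p',q'\in R$ with $q'qb=b$ and $cpp'=c$. The following are equivalent: (i) $paq$ is $(b,c)$-invertible; (ii) $a$ is $(qb,cp)$-invertible. In this case, if $y$ is the $(b,c)$-inverse of $paq$ and $w$ is the $(qb,cp)$-inverse of $a$, then $w=qyp$.
   Context: For $\alpha,b,c\in R$, $\alpha$ is $(b,c)$-invertible if there is $y\in R$ with $y\in (bRy)\cap(yRc)$, $y\alpha b=b$ and $c\alpha y=c$, where $xR=\{xr:r\in R\}$ and $Rx=\{rx:r\in R\}$; such $y$ is unique and called the $(b,c)$-inverse of $\alpha$. *)

From mathcomp Require Import all_boot all_algebra.
Set Implicit Arguments. Unset Strict Implicit. Unset Printing Implicit Defensive.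
Import GRing.Theory.
Local Open Scope ring_scope.

Definition is_bc_inverse (R : pzRingType) (a b c y : R) : Prop :=
  [/\ (exists r : R, y = b * r * y),
      (exists s : R, y = y * s * c),
      y * a * b = b &
      c * a * y = c].

Definition bc_invertible (R : pzRingType) (a b c : R) : Prop :=
  exists y : R, is_bc_inverse a b c y.

(** Both directions transport inverses through the sandwich [y |-> q y p].
    Since a [(b,c)]-inverse [y] lies in [bRy] and in [yRc], the hypotheses
    [q' q b = b] and [c p p' = c] give [q' q y = y] and [y p p' = y], which is
    all that is needed to see that [q y p] is a [(qb,cp)]-inverse of [a].
    Conversely, if [w = qb r w = w s cp] is a [(qb,cp)]-inverse of [a], then
    [qb] and [cp] are regular with inner inverses [r] and [s], so cancelling
    [q'] and [p'] gives [b r q b = b] and [c p s c = c]; with these,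
    [b r w s c] is a [(b,c)]-inverse of [paq] whose sandwich is [w].
    Uniqueness of [(b,c)]-inverses then yields [w = q y p]. *)
From mathcomp Require Import all_boot all_algebra.
Local Open Scope ring_scope.
Import GRing.Theory.

Section BCInverse.
Context {R : pzRingType}.
Implicit Types a b c p q u y w : R.

Lemma bc_inverse_unique {a b c y w} :
  is_bc_inverse a b c y -> is_bc_inverse a b c w -> y = w.
Proof.
case=> _ [s Hy] Hyb _ [[r Hw] _ _ Hcw].
have -> : y = y * a * w by rewrite [in LHS]Hy -Hcw !mulrA -Hy.
by rewrite [in RHS]Hw -[in RHS]Hyb -!mulrA (mulrA b) -Hw mulrA.
Qed.

Lemma bc_inverse_regularl {a b c y r} :
  is_bc_inverse a b c y -> y = b * r * y -> b * r * b = b.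
Proof. by case=> _ _ Hb _ Hy; rewrite -{2}Hb !mulrA -Hy Hb. Qed.

Lemma bc_inverse_regularr {a b c y s} :
  is_bc_inverse a b c y -> y = y * s * c -> c * s * c = c.
Proof. by case=> _ _ _ Hc Hy; rewrite -{1}Hc -!mulrA (mulrA y) -Hy mulrA Hc. Qed.

Lemma absorbl_range {b r u y} : u * b = b -> y = b * r * y -> u * y = y.
Proof. by move=> Hu Hy; rewrite Hy !mulrA Hu. Qed.

Lemma absorbr_range {c s u y} : c * u = c -> y = y * s * c -> y * u = y.
Proof. by move=> Hu Hy; rewrite Hy -!mulrA Hu. Qed.

Lemma bc_inverse_sandwich {a b c p q p' q' y} :
  q' * q * b = b -> c * p * p' = c ->
  is_bc_inverse (p * a * q) b c y ->
  is_bc_inverse a (q * b) (c * p) (q * y * p).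
Proof.
move=> Hq Hp [[r Hr] [s Hs] Hb Hc].
have Hqy : q' * q * y = y := absorbl_range Hq Hr.
have Hyp : y * (p * p') = y by apply: absorbr_range Hs; rewrite mulrA.
split.
- by exists (r * q'); rewrite {1}Hr -{1}Hqy !mulrA.
- by exists (p' * s); rewrite {1}Hs -{1}Hyp !mulrA.
- by rewrite -[in RHS]Hb !mulrA.
- by rewrite -[in RHS]Hc !mulrA.
Qed.

Lemma bc_inverse_unsandwich {a b c p q p' q' w} :
  q' * q * b = b -> c * p * p' = c ->
  is_bc_inverse a (q * b) (c * p) w ->
  exists2 y, is_bc_inverse (p * a * q) b c y & q * y * p = w.
Proof.
move=> Hq Hp Hw; case: (Hw) => [[r Hr] [s Hs] Hb Hc].
have Hbrqb : b * r * (q * b) = b.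
  by move: (congr1 (fun x => q' * x) (bc_inverse_regularl Hw Hr)); rewrite !mulrA Hq.
have Hcpsc : c * p * s * c = c.
  move: (congr1 (fun x => x * p') (bc_inverse_regularr Hw Hs)).
  by rewrite -!mulrA !(mulrA c p p') Hp.
exists (b * r * w * s * c); first split.
- by exists (r * q); rewrite -{1}Hbrqb !mulrA.
- by exists (p * s); rewrite -{1}Hcpsc !mulrA.
- by rewrite -[in RHS]Hbrqb -[in RHS]Hb [in RHS]Hs !mulrA.
- by rewrite -[in RHS]Hcpsc -[in RHS]Hc [in RHS]Hr !mulrA.
- by rewrite [in RHS]Hr [in RHS]Hs !mulrA.
Qed.

End BCInverse.

Theorem corollary3p5 (R : pzRingType) (a b c p q : R) :
  (exists p' q' : R, q' * q * b = b /\ c * p * p' = c) ->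
  (bc_invertible (p * a * q) b c <-> bc_invertible a (q * b) (c * p)) /\
  (forall y w : R, is_bc_inverse (p * a * q) b c y ->
     is_bc_inverse a (q * b) (c * p) w -> w = q * y * p).
Proof.
case=> p' [q' [Hq Hp]]; split.
- split; case.
  + by move=> y Hy; exists (q * y * p); apply: bc_inverse_sandwich Hq Hp Hy.
  + by move=> w /(bc_inverse_unsandwich Hq Hp) [y Hy _]; exists y.
- move=> y w Hy Hw; apply: bc_inverse_unique Hw _.
  exact: bc_inverse_sandwich Hq Hp Hy.
Qed.
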